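(* Let $p_0,p_1,p_2$ be positive integers with $\gcd(p_0,p_1,p_2)=1$, and put $n=p_0+p_1+p_2$. Let $E=(\mathbb{Z}/n\mathbb{Z})\times\{0,1,2\}$ (a set of $3n$ elements) and define permutations $\sigma_0,\sigma_1$ of $E$ by $$\sigma_0(m,0)=(m,1),\quad \sigma_0(m,1)=(m,2),\quad \sigma_0(m,2)=(m,0),$$ $$\sigma_1(m,0)=(m-p_1,2),\quad \sigma_1(m,1)=(m-p_2,0),\quad \sigma_1(m,2)=(m-p_0,1),$$ with arithmetic in the first coordinate taken modulo $n$. Let $G=\langle\sigma_0,\sigma_1\rangle$ (the monodromy group of the dessin $D(p_0,p_1,p_2)$ on the billiards surface of the triangle with angles $p_0\pi/n,p_1\pi/n,p_2\pi/n$), $N=\langle\sigma_0\sigma_1,\sigma_1\sigma_0\rangle$ and $H=\langle\sigma_0\rangle$. Then $G=N\rtimes H$ (internal semidirect product, with $N$ normal). Furthermore, if $\alpha=\gcd(n,\,p_0p_1-p_2^2)$, then $$G\cong (C_n\times C_{n/\alpha})\rtimes C_3,$$ where $C_k$ denotes the cyclic group of order $k$.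
   Context: The dessin $D(p_0,p_1,p_2)$ is the bicolored graph on the rational billiards surface of the triangle with angles $(p_0\pi/n,p_1\pi/n,p_2\pi/n)$, with a black vertex in each of the $n$ copies of the triangle having the original orientation, a white vertex in each of the $n$ reflected copies, and an edge for each pair of adjacent triangles. Edges are labeled $(m,i)$, where $m$ indexes the black vertex (the copy rotated by $2m\pi/n$) and $i$ indicates the side $s_i$ (opposite the angle $p_i\pi/n$) through which the edge passes; the monodromy permutations $\sigma_0,\sigma_1$ (counterclockwise rotation of edges around black, resp. white, vertices) act on the edges by the formulas given in the claim. Products of permutations are composed as functions, $(\sigma_0\sigma_1)(e)=\sigma_0(\sigma_1(e))$. *)

From mathcomp Require Import all_boot all_order all_algebra all_fingroup all_solvable.
Set Implicit Arguments. Unset Strict Implicit. Unset Printing Implicit Defensive.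

Definition edge (n : nat) : finType := ('I_n * 'I_3)%type.

Lemma ord_n_gt0 n (m : 'I_n) : 0 < n.
Proof. exact: leq_ltn_trans (leq0n m) (ltn_ord m). Qed.

(* subm m k = (m - k) mod n *)
Definition subm n (m : 'I_n) (k : nat) : 'I_n :=
  Ordinal (ltn_pmod (m + (n - k %% n)) (ord_n_gt0 m)).

Lemma subm_inj n k : injective (fun m : 'I_n => subm m k).
Proof.
move=> a b /(congr1 val) /= /eqP; rewrite eqn_modDr => /eqP.
by rewrite !modn_small // => /val_inj.
Qed.

Definition sigma0_fun n (x : edge n) : edge n := (x.1, ordS x.2).

(* sigma1 (m,0) = (m-p1,2), (m,1) = (m-p2,0), (m,2) = (m-p0,1):
   second coordinate i |-> i-1 mod 3, shift q i = [:: p1; p2; p0]`_i. *)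
Definition sigma1_fun (p0 p1 p2 : nat) n (x : edge n) : edge n :=
  (subm x.1 (nth 0 [:: p1; p2; p0] x.2), ord_pred x.2).

Lemma sigma0_inj n : injective (@sigma0_fun n).
Proof.
move=> [a i] [b j] H.
have E1 := congr1 fst H; have E2 := congr1 snd H.
by rewrite /= in E1 E2; rewrite E1 (ordS_inj E2).
Qed.

Lemma sigma1_inj p0 p1 p2 n : injective (@sigma1_fun p0 p1 p2 n).
Proof.
move=> [a i] [b j] H.
have E1 := congr1 fst H; have E2 := congr1 snd H.
rewrite /= in E1 E2; have E := ord_pred_inj E2; subst j.
by rewrite (subm_inj E1).
Qed.

Definition sigma0 n : {perm edge n} := perm (@sigma0_inj n).
Definition sigma1 p0 p1 p2 : {perm edge (p0 + p1 + p2)} :=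
  perm (@sigma1_inj p0 p1 p2 (p0 + p1 + p2)).

Open Scope group_scope.

Definition monodromy p0 p1 p2 : {group {perm edge (p0 + p1 + p2)}} :=
  generated_group [set sigma0 (p0 + p1 + p2); sigma1 p0 p1 p2].

(* N = <sigma0 sigma1, sigma1 sigma0>.  (MathComp's product s * t is
   "first s, then t", so the paper's sigma0 sigma1 is sigma1 * sigma0;
   the generating set is symmetric in any case.) *)
Definition monoN p0 p1 p2 : {group {perm edge (p0 + p1 + p2)}} :=
  generated_group [set sigma1 p0 p1 p2 * sigma0 (p0 + p1 + p2);
         sigma0 (p0 + p1 + p2) * sigma1 p0 p1 p2].

Definition monoH p0 p1 p2 : {group {perm edge (p0 + p1 + p2)}} :=
  cycle_group (sigma0 (p0 + p1 + p2)).

From mathcomp Require Import all_boot all_order all_algebra all_fingroup all_solvable.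
From mathcomp Require Import ring.
Set Implicit Arguments. Unset Strict Implicit. Unset Printing Implicit Defensive.
Import GRing.Theory Num.Theory.

(* sigma1 sigma0 and sigma0 sigma1 are translations: they fix each of the
   three sheets {(m, i) | m : Z/n} and shift sheet i by an amount w_i, with
   w_0 + w_1 + w_2 = 0.  The translations by (w_0, w_1) in Z^2 form a quotient
   of Z^2 in which w acts trivially iff n divides w, so N is the image in
   (Z/n)^2 of the row lattice of A = [[-p1, -p2], [-p2, -p0]].  Writing
   A = L diag(d_0, d_1) R in Smith normal form with L, R unimodular gives
   N = C_{n/(n,d_0)} x C_{n/(n,d_1)}; here d_0 divides gcd(p0, p1, p2) = 1 and
   |d_0 d_1| = |det A| = |p0 p1 - p2^2|.
   Since sigma0^3 = sigma1^3 = 1, the conjugates of sigma1 sigma0 and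
   sigma0 sigma1 by sigma0 are words in these two elements, so sigma0
   normalizes N and G = N <sigma0>; translations fix the sheets while sigma0
   and sigma0^2 permute them, so N meets <sigma0> trivially. *)

Lemma gen_set2_commute (gT : finGroupType) (a b : gT) :
  commute a b -> <<[set a; b]>> = (<[a]> * <[b]>)%g.
Proof.
move=> ab; rewrite -cent_joinEr ?cents_cycle //; apply/eqP; rewrite eqEsubset.
rewrite gen_subG subUset !sub1set !mem_gen ?inE ?cycle_id ?orbT //=.
by rewrite join_subG !cycle_subG !mem_gen // !inE eqxx ?orbT.
Qed.

Section GeneratorsOfOrder3.

Variables (gT : finGroupType) (x y : gT).
Hypotheses (x3 : x ^+ 3 = 1) (y3 : y ^+ 3 = 1).

Lemma expg3_mulgg (z : gT) : z ^+ 3 = 1 -> z * z = z^-1.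
Proof. by move=> z3; apply/esym/eqP; rewrite eq_invg_mul -z3 !expgS expg0 mulg1. Qed.

Lemma norm_gen_mulC : x \in 'N(<<[set y * x; x * y]>>).
Proof.
have yxJ : (y * x) ^ x = (y * x)^-1 * (x * y)^-1.
  rewrite conjgE !invMg !mulgA -(mulgA _ x x) (expg3_mulgg x3).
  by rewrite -(mulgA _ y^-1 y^-1) -invMg (expg3_mulgg y3) invgK.
have xyJ : (x * y) ^ x = y * x by rewrite conjgE !mulgA mulVg mul1g.
rewrite inE -genJ gen_subG conjUg !conjg_set1 subUset !sub1set yxJ xyJ.
by rewrite groupM ?groupV ?mem_gen // !inE eqxx ?orbT.
Qed.

Lemma sdprod_gen_mulC :
  <<[set y * x; x * y]>> :&: <[x]> = 1 ->
  <<[set y * x; x * y]>> ><| <[x]> = <<[set x; y]>>.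
Proof.
move=> ti; rewrite sdprodEY ?cycle_subG ?norm_gen_mulC //; apply/eqP.
rewrite eqEsubset join_subG cycle_subG !gen_subG !subUset !sub1set.
have x_in : x \in <<[set y * x; x * y]>> <*> <[x]> by rewrite mem_gen // inE cycle_id orbT.
apply/and3P; split=> //; first by rewrite !groupM ?mem_gen // !inE eqxx ?orbT.
by rewrite -{1}(mulgK x y) groupM ?groupV // mem_gen // inE mem_gen // !inE eqxx.
Qed.

End GeneratorsOfOrder3.

Lemma dvdn_mul_divgcd n c k : (0 < n)%N -> (n %| k * c)%N = (n %/ gcdn n c %| k)%N.
Proof.
move=> n_gt0; have g_gt0 : (0 < gcdn n c)%N by rewrite gcdn_gt0 n_gt0.
have cop : coprime (n %/ gcdn n c) (c %/ gcdn n c).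
  rewrite /coprime -(eqn_pmul2r g_gt0) muln_gcdl !divnK ?dvdn_gcdl ?dvdn_gcdr //.
  by rewrite mul1n.
have -> : (k * c = k * (c %/ gcdn n c) * gcdn n c)%N.
  by rewrite -mulnA divnK ?dvdn_gcdr.
rewrite {1}(_ : n = n %/ gcdn n c * gcdn n c)%N; last by rewrite divnK ?dvdn_gcdl.
by rewrite dvdn_pmul2r // Gauss_dvdl.
Qed.

Section IntMatrix.

Local Open Scope ring_scope.

Lemma absz_unit (x : int) : x \is a GRing.unit -> `|x|%N = 1%N.
Proof. by rewrite unfold_in => /orP[] /eqP ->. Qed.

Lemma dvdz_mulmxr (c : int) m k l (X : 'M[int]_(m, k)) (M : 'M[int]_(k, l)) :
  (forall i j, c %| X i j)%Z -> forall i j, (c %| (X *m M) i j)%Z.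
Proof. by move=> cX i j; rewrite mxE rpred_sum // => t _; apply/dvdz_mulr/cX. Qed.

Lemma dvdz_mulmxl (c : int) m k l (X : 'M[int]_(m, k)) (M : 'M[int]_(k, l)) :
  (forall i j, c %| M i j)%Z -> forall i j, (c %| (X *m M) i j)%Z.
Proof. by move=> cM i j; rewrite mxE rpred_sum // => t _; apply/dvdz_mull/cM. Qed.

Lemma det_mx22 (R : comPzRingType) (M : 'M[R]_2) : \det M = M 0 0 * M 1 1 - M 0 1 * M 1 0.
Proof.
rewrite (expand_det_row M 0) big_ord_recr big_ord1 /cofactor !det_mx11 /= !mxE.
have -> : widen_ord (leqnSn 1) ord0 = 0 :> 'I_2 by apply: val_inj.
have -> : ord_max = 1 :> 'I_2 by apply: val_inj.
have -> : lift 0 (0 : 'I_1) = 1 :> 'I_2 by apply: val_inj.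
have -> : lift 1 (0 : 'I_1) = 0 :> 'I_2 by apply: val_inj.
by rewrite expr0 expr1 mul1r mulN1r mulrN.
Qed.

Definition diag_seq_mx m k (d : seq int) : 'M[int]_(m, k) :=
  \matrix_(i, j) (d`_i *+ (i == j :> nat)).

Lemma det_diag_seq_mx k (L R : 'M[int]_k) d : L \in unitmx -> R \in unitmx ->
  absz (\det (L *m diag_seq_mx k k d *m R)) = absz (\prod_(i < k) d`_i).
Proof.
move=> L_unit R_unit; rewrite !det_mulmx !abszM.
rewrite (@absz_unit (\det L)) ?(@absz_unit (\det R)) -?unitmxE // mul1n muln1.
have -> : diag_seq_mx k k d = diag_mx (\row_(i < k) d`_i).
  by apply/matrixP => i j; rewrite !mxE.
by rewrite det_diag; under eq_bigr do rewrite mxE.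
Qed.

Lemma dvdz_diag_seq_mx m k (L : 'M[int]_m) (R : 'M[int]_k) d : sorted dvdz d ->
  forall i j, (d`_0 %| (L *m diag_seq_mx m k d *m R) i j)%Z.
Proof.
move=> d_sorted; apply: dvdz_mulmxr; apply: dvdz_mulmxl => i j.
have d0_dvd : (d`_0 %| d`_i)%Z.
  case: (ltnP i (size d)) => [lt_i_d | ge_i_d]; last by rewrite nth_default ?dvdz0.
  by apply: (sorted_leq_nth dvdz_trans dvdzz) => //; rewrite inE (leq_ltn_trans _ lt_i_d).
by rewrite mxE; case: (i == j :> nat); rewrite ?dvdz0.
Qed.

End IntMatrix.

Section Translations.

Variable n : nat.
Local Open Scope ring_scope.

Lemma ord_addz_subproof (m : 'I_n) (z : int) : (`|((m%:Z + z) %% n)%Z| < n)%N.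
Proof.
have n_gt0 : (0 < n)%N := ord_n_gt0 m.
by rewrite -ltz_nat gez0_abs ?modz_ge0 ?ltz_pmod // -lt0n.
Qed.

Definition ord_addz (m : 'I_n) (z : int) : 'I_n := Ordinal (ord_addz_subproof m z).

Lemma ord_addzE (m : 'I_n) z : (ord_addz m z)%:Z = ((m%:Z + z) %% n)%Z.
Proof. by rewrite /= gez0_abs // modz_ge0 // -lt0n (ord_n_gt0 m). Qed.

Lemma eq_ord_addz (m m' : 'I_n) z z' :
  (ord_addz m z == ord_addz m' z') = (m%:Z + z == m'%:Z + z' %[mod n])%Z.
Proof. by rewrite -val_eqE -eqz_nat !ord_addzE. Qed.

Lemma ord_addz0 (m : 'I_n) : ord_addz m 0 = m.
Proof. by apply/val_inj/eqP; rewrite -eqz_nat ord_addzE addr0 modz_small ?ltz_nat ?ltn_ord. Qed.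

Lemma ord_addzA (m : 'I_n) z z' : ord_addz (ord_addz m z) z' = ord_addz m (z + z').
Proof. by apply/eqP; rewrite eq_ord_addz ord_addzE modzDml addrA. Qed.

Lemma ord_addz_mod (m : 'I_n) z z' : (z == z' %[mod n])%Z -> ord_addz m z = ord_addz m z'.
Proof. by move=> /eqP zz'; apply/eqP; rewrite eq_ord_addz -modzDmr zz' modzDmr. Qed.

Lemma subm_ord_addz (m : 'I_n) (k : nat) : subm m k = ord_addz m (- k%:Z).
Proof.
have n_gt0 : (0 < n)%N := ord_n_gt0 m.
apply/val_inj/eqP; rewrite -eqz_nat ord_addzE.
have -> : val (subm m k) = ((m + (n - k %% n)) %% n)%N by [].
rewrite -modz_nat eqz_mod_dvd PoszD -subzn; last by rewrite ltnW ?ltn_pmod.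
rewrite -modz_nat.
have -> : (m%:Z + (n%:Z - (k %% n)%Z)) - (m%:Z - k%:Z) = n%:Z * (1 + (k %/ n)%Z).
  by rewrite {2}(divz_eq k n); ring.
exact: dvdz_mulr (dvdzz _).
Qed.

Lemma ord_addz_id (m : 'I_n) z : (ord_addz m z == m) = (n %| z)%Z.
Proof.
rewrite -{2}(ord_addz0 m) eq_ord_addz eqz_mod_dvd.
by rewrite addr0 addrAC subrr add0r.
Qed.

Definition sheet_shift (w : 'rV[int]_2) (i : 'I_3) : int :=
  [:: w 0 0; w 0 1; - (w 0 0 + w 0 1)]`_i.

Lemma sheet_shiftD w w' i : sheet_shift (w + w') i = sheet_shift w i + sheet_shift w' i.
Proof. by rewrite /sheet_shift; case: i => [[|[|[|]]] ?] //=; rewrite !mxE //; ring. Qed.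

Lemma sheet_shift_widen w (j : 'I_2) : sheet_shift w (widen_ord (leqnSn 2) j) = w 0 j.
Proof. by rewrite /sheet_shift; case: j => [[|[|]] ?] //=; congr (w _ _); apply: val_inj. Qed.

Definition transl_fun (w : 'rV[int]_2) (x : edge n) : edge n :=
  (ord_addz x.1 (sheet_shift w x.2), x.2).

Lemma transl_fun_inj w : injective (transl_fun w).
Proof.
move=> [a i] [b j] ab; have ij : i = j := congr1 snd ab; subst j.
have := congr1 (fun x => ord_addz x.1 (- sheet_shift w i)) ab.
by rewrite /= !ord_addzA !subrr !ord_addz0 => ->.
Qed.

Definition transl w : {perm edge n} := perm (@transl_fun_inj w).

Lemma translE w x : transl w x = (ord_addz x.1 (sheet_shift w x.2), x.2).
Proof. by rewrite permE. Qed.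

Lemma translD w w' : transl (w + w') = (transl w * transl w')%g.
Proof. by apply/permP => x; rewrite permM !translE ord_addzA sheet_shiftD. Qed.

Lemma transl0 : transl 0 = 1%g.
Proof.
apply/permP => -[m i]; rewrite perm1 translE /=.
suff -> : sheet_shift 0 i = 0%R by rewrite ord_addz0.
by rewrite /sheet_shift; case: i => [[|[|[|]]] ?] //=; rewrite !mxE ?addr0 ?oppr0.
Qed.

Lemma translN w : transl (- w) = (transl w)^-1%g.
Proof. by apply/esym/eqP; rewrite eq_invg_mul -translD addrN transl0. Qed.

Lemma translMn w k : (transl w ^+ k)%g = transl (w *+ k).
Proof. by elim: k => [|k IHk]; rewrite ?transl0 // expgSr IHk mulrSr translD. Qed.

Lemma transl_commute w w' : commute (transl w) (transl w').
Proof. by rewrite /commute -!translD addrC. Qed.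

Lemma transl_eq1 w : (0 < n)%N -> (transl w == 1%g) = [forall j, (n %| w ord0 j)%Z].
Proof.
move=> n_gt0; pose m0 := Ordinal n_gt0.
apply/eqP/forallP => [w1 j | wn].
  have /eqP := congr1 (fun s : {perm edge n} => (s (m0, widen_ord (leqnSn 2) j)).1) w1.
  by rewrite perm1 translE ord_addz_id sheet_shift_widen.
apply/permP => -[m i]; rewrite perm1 translE; congr pair; apply/eqP.
rewrite ord_addz_id /sheet_shift; have := wn 0; have := wn 1.
by case: i => [[|[|[|]]] ?] //= *; rewrite ?rpredN ?rpredD.
Qed.

Lemma transl_scale_cycle c w : transl (c *: w) \in <[transl w]>%g.
Proof.
have -> : c *: w = w *~ c by rewrite -scaler_int intz.
case: c => k /=; first by rewrite -translMn mem_cycle.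
by rewrite translN -translMn groupV mem_cycle.
Qed.

Definition transl_span (A : 'M[int]_2) : {group {perm edge n}} :=
  generated_group [set transl (row 0 A); transl (row 1 A)].

Lemma mem_transl_span z A : transl (z *m A) \in transl_span A.
Proof.
rewrite mulmx_sum_row big_ord_recl big_ord1 translD.
have -> : lift ord0 ord0 = 1 :> 'I_2 by apply: val_inj.
rewrite groupM // (subsetP _ _ (transl_scale_cycle _ _)) //;
  by rewrite cycle_subG mem_gen // !inE eqxx ?orbT.
Qed.

Lemma transl_span_mull L A : L \in unitmx -> transl_span (L *m A) = transl_span A.
Proof.
have sub B M : transl_span (M *m B) \subset transl_span B.
  by rewrite gen_subG subUset !sub1set !row_mul !mem_transl_span.
move=> L_unit; apply/val_inj/eqP; rewrite eqEsubset sub.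
by rewrite -{1}[A](mulKmx L_unit) sub.
Qed.

Lemma transl_spanP A x : x \in transl_span A -> exists w, x = transl w.
Proof.
rewrite /transl_span /= gen_set2_commute; last exact: transl_commute.
case/mulsgP=> _ _ /cycleP[i ->] /cycleP[j ->] ->.
by exists (row 0 A *+ i + row 1 A *+ j); rewrite translD !translMn.
Qed.

End Translations.

Section TranslSmith.

Variables (n : nat) (R : 'M[int]_2).
Hypotheses (n_gt0 : (0 < n)%N) (R_unit : R \in unitmx).
Local Open Scope ring_scope.

Lemma transl_mulmx_eq1 y : (transl n (y *m R) == 1%g) = [forall j, (n %| y ord0 j)%Z].
Proof.
rewrite transl_eq1 //; apply/forallP/forallP => yn j; last first.
  by apply: dvdz_mulmxr => i {}j; rewrite [i]ord1.
by rewrite -(mulmxK R_unit y); apply: dvdz_mulmxr => i {}j; rewrite [i]ord1.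
Qed.

Lemma transl_delta_eq1 i c : (transl n ((c *: 'e_i) *m R) == 1%g) = (n %| c)%Z.
Proof.
rewrite transl_mulmx_eq1; apply/forallP/idP => [/(_ i)|nc j].
  by rewrite !mxE /= eqxx mulr1.
by rewrite !mxE /=; case: eqP => _; rewrite ?mulr1 ?mulr0.
Qed.

Lemma translX_delta i c k :
  (transl n ((c *: 'e_i) *m R) ^+ k)%g = transl n (((c *+ k) *: 'e_i) *m R).
Proof. by rewrite translMn -!scalemxAl scalerMnl. Qed.

Lemma order_transl_delta i c : #[transl n ((c *: 'e_i) *m R)]%g = (n %/ gcdn n `|c|)%N.
Proof.
have expE k : (transl n ((c *: 'e_i) *m R) ^+ k == 1)%g = (n %/ gcdn n `|c| %| k)%N.
  by rewrite translX_delta transl_delta_eq1 -mulr_natr natz -dvdn_mul_divgcd // dvdzE abszM mulnC.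
by apply/eqP; rewrite eqn_dvd order_dvdn expE dvdnn -expE expg_order eqxx.
Qed.

Lemma transl_span_smith_isog L d : L \in unitmx ->
  transl_span n (L *m diag_seq_mx 2 2 d *m R)
    \isog setX (Zp (n %/ gcdn n `|d`_0|)) (Zp (n %/ gcdn n `|d`_1|)).
Proof.
move=> L_unit; set D := diag_seq_mx 2 2 d.
set g := transl n ((d`_0 *: 'e_0) *m R); set h := transl n ((d`_1 *: 'e_1) *m R).
have rowDR i : row i (D *m R) = (d`_i *: 'e_i) *m R.
  by rewrite row_mul; congr (_ *m R); apply/rowP => j; rewrite !mxE eqxx /= eq_sym mulr_natr.
have spanE : transl_span n (L *m D *m R) = (<[g]> * <[h]>)%g :> {set _}.
  by rewrite -mulmxA transl_span_mull // /= !rowDR gen_set2_commute; last exact: transl_commute.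
have ti : <[g]> :&: <[h]> = 1%g.
  apply/trivgP/subsetP => _ /setIP[/cycleP[i ->] /cycleP[j gh]].
  have /eqP := mulgV (h ^+ j)%g; rewrite -{1}gh /g /h !translX_delta -translN -translD.
  rewrite -mulmxBl transl_mulmx_eq1 => /forallP/(_ 0).
  by rewrite !mxE /= mulr1 mulr0 oppr0 addr0 inE transl_delta_eq1.
have dG : <[g]> \x <[h]> = transl_span n (L *m D *m R).
  by rewrite dprodE ?cents_cycle //; last exact: transl_commute.
apply: (isog_dprod dG (setX_dprod _ _)).
  apply: isog_trans (isog_setX1 _ _).
  by rewrite -(order_transl_delta 0 d`_0) isog_sym Zp_isog.
apply: isog_trans (isog_set1X _ _).
by rewrite -(order_transl_delta 1 d`_1) isog_sym Zp_isog.
Qed.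

End TranslSmith.

Section Sigma0.

Variable n : nat.

Lemma sigma0_expg3 : sigma0 n ^+ 3 = 1.
Proof.
apply/permP => -[m i]; rewrite perm1 !expgS expg0 mulg1 !permM !permE /sigma0_fun /=.
by congr pair; apply: val_inj; case: i => [[|[|[|]]] ?].
Qed.

Lemma sigma0X_transl k w : (0 < n)%N -> sigma0 n ^+ k = transl n w -> sigma0 n ^+ k = 1.
Proof.
move=> n_gt0; rewrite -(expg_mod k sigma0_expg3).
have : (k %% 3 < 3)%N by rewrite ltn_pmod.
case: (k %% 3)%N => [|[|[|//]]] _ // skw;
  have := congr1 (fun s : {perm edge n} => val (s (Ordinal n_gt0, ord0)).2) skw;
  by rewrite !expgS expg0 mulg1 ?permM translE !permE.
Qed.

Lemma order_sigma0 : (0 < n)%N -> #[sigma0 n] = 3.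
Proof.
move=> n_gt0; apply: nt_prime_order sigma0_expg3 _ => //; apply/eqP => s1.
have := congr1 (fun s : {perm edge n} => val (s (Ordinal n_gt0, ord0)).2) s1.
by rewrite perm1 permE.
Qed.

End Sigma0.

Section Dessin.

Variables p0 p1 p2 : nat.
Local Notation n := (p0 + p1 + p2)%N.
Local Open Scope ring_scope.

(* Row 0 (resp. 1) holds the shifts of sigma1 * sigma0 (resp. sigma0 * sigma1)
   on sheets 0 and 1: sheet i moves by -q_(i + row), q the shift list of sigma1. *)
Definition dessin_mx : 'M[int]_2 :=
  \matrix_(i, j) - (nth 0 [:: p1; p2; p0] (i + j))%:Z.

Lemma sigma1_expg3 : (sigma1 p0 p1 p2 ^+ 3 = 1)%g.
Proof.
apply/permP => -[m i]; rewrite perm1 !expgS expg0 mulg1 !permM !permE /sigma1_fun /=.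
congr pair; last by apply: val_inj; case: i => [[|[|[|]]] ?].
rewrite !subm_ord_addz !ord_addzA -[RHS]ord_addz0; apply: ord_addz_mod.
rewrite eqz_mod_dvd subr0; apply/dvdzP; exists (-1).
by case: i => [[|[|[|]]] ?] //=; rewrite !PoszD; ring.
Qed.

Lemma sigma1_sigma0 : (sigma1 p0 p1 p2 * sigma0 n)%g = transl n (row 0 dessin_mx).
Proof.
apply/permP => -[m i]; rewrite permM translE !permE /sigma1_fun /sigma0_fun /=.
rewrite ord_predK subm_ord_addz; congr pair; apply: ord_addz_mod.
case: i => [[|[|[|]]] ?] //=; rewrite /sheet_shift /= !mxE //=.
by rewrite eqz_mod_dvd; apply/dvdzP; exists (-1); rewrite !PoszD; ring.
Qed.

Lemma sigma0_sigma1 : (sigma0 n * sigma1 p0 p1 p2)%g = transl n (row 1 dessin_mx).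
Proof.
apply/permP => -[m i]; rewrite permM translE !permE /sigma1_fun /sigma0_fun /=.
rewrite ordSK subm_ord_addz; congr pair; apply: ord_addz_mod.
case: i => [[|[|[|]]] ?] //=; rewrite /sheet_shift /= !mxE //=.
by rewrite eqz_mod_dvd; apply/dvdzP; exists (-1); rewrite !PoszD; ring.
Qed.

Lemma monoN_transl_span : monoN p0 p1 p2 = transl_span n dessin_mx :> {set _}.
Proof. by rewrite /= sigma1_sigma0 sigma0_sigma1. Qed.

Lemma monodromy_sdprod :
  (0 < n)%N -> (monoN p0 p1 p2 ><| monoH p0 p1 p2 = monodromy p0 p1 p2)%g.
Proof.
move=> n_gt0; have ti : monoN p0 p1 p2 :&: monoH p0 p1 p2 = 1%g.
  apply/trivgP/subsetP => x /setIP[xN /cycleP[k xk]].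
  have [w xw] : exists w, x = transl n w.
    by apply: (@transl_spanP _ dessin_mx); rewrite -monoN_transl_span.
  by rewrite inE xk (sigma0X_transl n_gt0 (etrans (esym xk) xw)).
exact: sdprod_gen_mulC (sigma0_expg3 n) sigma1_expg3 ti.
Qed.

Lemma det_dessin_mx : \det dessin_mx = (p0 * p1)%N%:Z - (p2 ^ 2)%N%:Z.
Proof. by rewrite det_mx22 !mxE /= -mulnn !PoszM; ring. Qed.

Lemma dvdz_dessin_mx_gcd c : (forall i j, c %| dessin_mx i j)%Z ->
  (`|c| %| gcdn (gcdn p0 p1) p2)%N.
Proof.
move=> cA; have := cA 0 0; have := cA 0 1; have := cA 1 1.
by rewrite !mxE /= !dvdzE !abszN /= => c_p0 c_p2 c_p1; rewrite !dvdn_gcd c_p0 c_p1 c_p2.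
Qed.

Lemma monoN_isog : (0 < n)%N -> gcdn (gcdn p0 p1) p2 = 1%N ->
  monoN p0 p1 p2 \isog setX (Zp n) (Zp (n %/ gcdn n (absz ((p0 * p1)%N%:Z - (p2 ^ 2)%N%:Z)))).
Proof.
move=> n_gt0 coprime_p.
have [L L_unit [R R_unit [d d_sorted dessinE]]] := int_Smith_normal_form dessin_mx.
change (dessin_mx = L *m diag_seq_mx 2 2 d *m R) in dessinE.
have d0 : absz d`_0 = 1%N.
  apply/eqP; rewrite -dvdn1 -coprime_p dvdz_dessin_mx_gcd // dessinE.
  exact: dvdz_diag_seq_mx.
have d1 : absz d`_1 = absz ((p0 * p1)%N%:Z - (p2 ^ 2)%N%:Z).
  by rewrite -det_dessin_mx dessinE det_diag_seq_mx // big_ord_recr big_ord1 abszM d0 mul1n.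
rewrite monoN_transl_span dessinE.
by have := transl_span_smith_isog n_gt0 R_unit d L_unit; rewrite d0 d1 gcdn1 divn1.
Qed.

End Dessin.

Theorem theorem1 (p0 p1 p2 : nat) :
  (0 < p0)%N -> (0 < p1)%N -> (0 < p2)%N -> gcdn (gcdn p0 p1) p2 = 1%N ->
  let n := (p0 + p1 + p2)%N in
  let alpha := gcdn n (absz (Posz (p0 * p1) - Posz (p2 ^ 2))%R) in
  (monoN p0 p1 p2 ><| monoH p0 p1 p2 = monodromy p0 p1 p2)%g /\
  exists K L : {group {perm edge n}},
    [/\ (K ><| L = monodromy p0 p1 p2)%g,
        K \isog setX (Zp n) (Zp (n %/ alpha)) &
        L \isog Zp 3].
Proof.
move=> p0_gt0 _ _ coprime_p n alpha.
have n_gt0 : (0 < n)%N by rewrite !addn_gt0 p0_gt0.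
have NH_sdprod := monodromy_sdprod n_gt0.
split=> //; exists (monoN p0 p1 p2), (monoH p0 p1 p2); split=> //.
  exact: monoN_isog.
by rewrite -(order_sigma0 n_gt0) isog_sym Zp_isog.
Qed.
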